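(* Let $g(t)=\sum_{n\ge0}g_nt^n$ be a real formal power series with $g_0=1$ and let $f(t)=\sum_{n\ge1}f_nt^n$ be a real formal power series with $f_1\ne0$. If the quasi-Riordan array $[g,f]$ is totally positive, then $f$ is a Pólya frequency power series, i.e. its coefficient sequence $(f_n)_{n\ge0}$ (with $f_0=0$) is a Pólya frequency sequence.
   Context: The quasi-Riordan array $[g,f]$ is the infinite lower triangular matrix $(r_{n,k})_{n,k\ge0}$ with $r_{n,0}=g_n$ and $r_{n,k}=[t^n]\,t^{k-1}f(t)=f_{n-k+1}$ for $k\ge1$ (with $f_j=0$ for $j\le0$); that is, its columns have generating functions $g,f,tf,t^2f,\dots$. An infinite matrix is totally positive (TP) if all its minors are nonnegative. A sequence $(a_n)_{n\ge0}$ of nonnegative reals is a Pólya frequency (PF) sequence if its Toeplitz matrix $[a_{i-j}]_{i,j\ge0}$ (with $a_m=0$ for $m<0$) is TP; a formal power series is a Pólya frequency power series if its coefficient sequence is PF. *)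

From mathcomp Require Import all_boot all_order all_algebra.
From mathcomp Require Import reals.
Set Implicit Arguments. Unset Strict Implicit. Unset Printing Implicit Defensive.
Import Order.TTheory GRing.Theory Num.Theory.
Local Open Scope ring_scope.

Definition infmx (R : realType) := nat -> nat -> R.

Definition incr_idx k (s : 'I_k -> nat) : Prop :=
  forall i j : 'I_k, (i < j)%N -> (s i < s j)%N.

Definition minor (R : realType) (A : infmx R) k (r c : 'I_k -> nat) : R :=
  \det (\matrix_(i < k, j < k) A (r i) (c j)).

Definition TP (R : realType) (A : infmx R) : Prop :=
  forall k (r c : 'I_k -> nat), incr_idx r -> incr_idx c -> 0 <= minor A r c.

Definition toeplitz (R : realType) (a : nat -> R) : infmx R :=
  fun i j => if (j <= i)%N then a (i - j)%N else 0.

Definition PF (R : realType) (a : nat -> R) : Prop :=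
  (forall n, 0 <= a n) /\ TP (toeplitz a).

(* Quasi-Riordan array [g, f]: column 0 is g, column k>=1 is t^(k-1) f,
   i.e. r_{n,k} = f_{n-k+1} (with f_j = 0 for j <= 0, i.e. n-k+1 <= 0). *)
Definition quasi_riordan (R : realType) (g f : nat -> R) : infmx R :=
  fun n k => if k == 0%N then g n
             else if (k <= n.+1)%N then f (n.+1 - k)%N else 0.

(* The columns of [g, f] other than the first are t^(k-1) f, so deleting the
   first column of [g, f] leaves exactly the Toeplitz matrix of f.  Total
   positivity passes to submatrices, and the entries of a TP matrix are
   nonnegative (1 x 1 minors). *)
From mathcomp Require Import all_boot all_order all_algebra.
From mathcomp Require Import reals.
Import Order.TTheory GRing.Theory Num.Theory.
Local Open Scope ring_scope.

Section TotalPositivity.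
Context {R : realType}.
Implicit Types A B : infmx R.

Lemma TP_eq {A B} : A =2 B -> TP A -> TP B.
Proof.
move=> eqAB tpA k r c hr hc; have := tpA k r c hr hc.
by rewrite /minor; under eq_mx do rewrite eqAB.
Qed.

Lemma TP_submx {A} {p q : nat -> nat} :
  {homo p : m n / (m < n)%N} -> {homo q : m n / (m < n)%N} ->
  TP A -> TP (fun i j => A (p i) (q j)).
Proof.
move=> p_incr q_incr tpA k r c hr hc.
by apply: (tpA k (p \o r) (q \o c)) => i j /= ltij; [apply/p_incr/hr | apply/q_incr/hc].
Qed.

Lemma TP_ge0 {A} : TP A -> forall i j, 0 <= A i j.
Proof.
move=> tpA i j; have incr1 (s : 'I_1 -> nat) : incr_idx s by move=> [[|?] ?] [[|?] ?].
by have := tpA 1%N (fun _ => i) (fun _ => j) (incr1 _) (incr1 _); rewrite /minor det_mx11 mxE.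
Qed.

Lemma quasi_riordan_succ_col (g f : nat -> R) :
  (fun n k => quasi_riordan g f n k.+1) =2 toeplitz f.
Proof. by []. Qed.

End TotalPositivity.

Theorem proposition2p3 (R : realType) (g f : nat -> R) :
  g 0%N = 1 -> f 0%N = 0 -> f 1%N != 0 ->
  TP (quasi_riordan g f) -> PF f.
Proof.
move=> _ f0 _ tp_gf.
have tp_f : TP (toeplitz f).
  by apply: TP_eq (quasi_riordan_succ_col g f) (TP_submx (p := id) (q := succn) _ _ tp_gf).
split=> // -[|n]; first by rewrite f0.
by have := TP_ge0 tp_f n.+1 0; rewrite /toeplitz subn0.
Qed.
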